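(* Let $k\ge1$ be an integer. If $\mathcal S=\{a_1<\cdots<a_m\}\subset\mathbb N$ is a $\mathcal D_k$ set, then, as $m\to\infty$, $$a_m\ \ge\ (1+o(1))\,\frac{(k+1)^m}{2}\sqrt{\frac{6}{m\pi k(k+2)}}.$$ Consequently, for an infinite $\mathcal D_k$ set $\mathcal S\subseteq\mathbb N$, as $n\to\infty$, $$|\mathcal S(n)|\ \le\ \log_{k+1}n+\frac12\log_{k+1}\log_2 n+\frac12\log_{k+1}\left(\frac{2\pi}{3}k(k+2)\right)+o(1),$$ where $\mathcal S(n):=\mathcal S\cap[1,n]$.
   Context: For a positive integer $k$, a set $\mathcal S\subseteq\mathbb N$ is a $\mathcal D_k$ set if any equality $\sum_{s\in\mathcal S}\varepsilon_s s=0$ with $\varepsilon_s\in\{-k,\dots,-1,0,1,\dots,k\}$ (only finitely many nonzero) implies that all $\varepsilon_s$ are $0$. *)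

From Stdlib Require Import Reals ZArith List.
Open Scope R_scope.

Definition zsum (eps : nat -> Z) (l : list nat) : Z :=
  fold_right (fun s acc => (eps s * Z.of_nat s + acc)%Z) 0%Z l.

(* Finitely supported coefficient families are represented by a
   duplicate-free finite list l of elements of S carrying the (possibly)
   nonzero coefficients. *)
Definition Dk (k : nat) (S : nat -> Prop) : Prop :=
  forall (l : list nat) (eps : nat -> Z),
    NoDup l ->
    (forall s, In s l -> S s) ->
    (forall s, In s l -> (Z.abs (eps s) <= Z.of_nat k)%Z) ->
    zsum eps l = 0%Z ->
    forall s, In s l -> eps s = 0%Z.

Definition logb (b x : R) : R := ln x / ln b.

Definition lower_bound (k m : nat) : R :=
  (INR (k + 1)) ^ m / 2 * sqrt (6 / (INR m * PI * INR k * INR (k + 2))).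

Definition count_bound (k n : nat) : R :=
  logb (INR (k + 1)) (INR n)
  + / 2 * logb (INR (k + 1)) (logb 2 (INR n))
  + / 2 * logb (INR (k + 1)) (2 * PI / 3 * (INR k * INR (k + 2))).

(* The [(k+1)^m] sums [sum_i e_i a_i] with [0 <= e_i <= k] are pairwise distinct: the
   difference of two of them is a relation with coefficients in [-k, k].  Viewed as the
   values of a sum of independent uniform digits, they have variance [k (k+2)/12 sum_i a_i^2],
   whereas [N] distinct integers have variance at least [(N^2 - 1)/12].  Hence
   [(k+1)^(2m) <= m k (k+2) a_m^2 + 1].  This gives the first bound for every [m], with the
   larger constant [1] in place of [sqrt (3 / (2 PI))], and, taking logarithms with
   [a_m <= n], the second bound without the [o(1)] term for every finite D_k subset of [1, n]
   as soon as [ln n >= 10000]. *)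

From Stdlib Require Import Reals ZArith List Lia Lra.
Import ListNotations.
Open Scope R_scope.

Section IntegerVariance.
Local Open Scope Z_scope.

Fixpoint sum_Z (L : list Z) : Z :=
  match L with [] => 0 | x :: L => x + sum_Z L end.

Fixpoint sum_sq_Z (L : list Z) : Z :=
  match L with [] => 0 | x :: L => x * x + sum_sq_Z L end.

Lemma sum_Z_app L1 L2 : sum_Z (L1 ++ L2) = sum_Z L1 + sum_Z L2.
Proof. induction L1 as [|x L1 IH]; simpl; lia. Qed.

Lemma sum_sq_Z_app L1 L2 : sum_sq_Z (L1 ++ L2) = sum_sq_Z L1 + sum_sq_Z L2.
Proof. induction L1 as [|x L1 IH]; simpl; lia. Qed.

Lemma sum_Z_shift c L :
  sum_Z (map (Z.add c) L) = c * Z.of_nat (length L) + sum_Z L.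
Proof.
  induction L as [|x L IH]; cbn [map length sum_Z]; [lia|].
  rewrite IH, Nat2Z.inj_succ. ring.
Qed.

Lemma sum_sq_Z_shift c L :
  sum_sq_Z (map (Z.add c) L)
  = c * c * Z.of_nat (length L) + 2 * c * sum_Z L + sum_sq_Z L.
Proof.
  induction L as [|x L IH]; cbn [map length sum_Z sum_sq_Z]; [lia|].
  rewrite IH, Nat2Z.inj_succ. ring.
Qed.

Lemma sum_sq_Z_reflect y L :
  sum_sq_Z (map (Z.sub y) L)
  = y * y * Z.of_nat (length L) - 2 * y * sum_Z L + sum_sq_Z L.
Proof.
  induction L as [|x L IH]; cbn [map length sum_Z sum_sq_Z]; [lia|].
  rewrite IH, Nat2Z.inj_succ. ring.
Qed.

Lemma sum_sq_Z_le L M : (forall x, In x L -> 0 <= x <= M) ->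
  sum_sq_Z L <= Z.of_nat (length L) * (M * M).
Proof.
  induction L as [|x L IH]; intros HL; cbn [length sum_sq_Z]; [lia|].
  assert (0 <= x <= M) by (apply HL; left; reflexivity).
  assert (sum_sq_Z L <= Z.of_nat (length L) * (M * M))
    by (apply IH; intros; apply HL; right; assumption).
  rewrite Nat2Z.inj_succ. nia.
Qed.

Lemma NoDup_length_le_range L (N : nat) : NoDup L ->
  (forall x, In x L -> 0 < x <= Z.of_nat N) -> (length L <= N)%nat.
Proof.
  intros HL Hrange.
  replace N with (length (map Z.of_nat (seq 1 N))) by now rewrite length_map, length_seq.
  apply NoDup_incl_length; [assumption|].
  intros x Hx. apply Hrange in Hx. apply in_map_iff. exists (Z.to_nat x).
  split; [lia|]. apply in_seq. lia.
Qed.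

Lemma NoDup_pos_exists_gt L (N : nat) : NoDup L -> (forall x, In x L -> 0 < x) ->
  length L = S N -> exists y, In y L /\ Z.of_nat N < y.
Proof.
  intros HL Hpos Hlen.
  destruct (Forall_Exists_dec (fun x => x <= Z.of_nat N) (fun x => Z_le_dec x _) L)
    as [Hall|Hex].
  - exfalso. enough (length L <= N)%nat by lia.
    apply NoDup_length_le_range; [assumption|].
    intros x Hx. rewrite Forall_forall in Hall.
    specialize (Hall x Hx). specialize (Hpos x Hx). lia.
  - apply Exists_exists in Hex as [y [Hy HyN]]. exists y. split; [assumption|lia].
Qed.

Lemma exists_max_Z L : L <> [] -> exists y, In y L /\ forall x, In x L -> x <= y.
Proof.
  induction L as [|a L IH]; intros H; [congruence|].
  destruct L as [|b L].
  - exists a. split; [left; reflexivity|]. intros x [->|[]]; lia.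
  - destruct IH as [y [Hy Hmax]]; [discriminate|].
    destruct (Z_le_gt_dec a y).
    + exists y. split; [right; assumption|]. intros x [->|Hx]; [lia|auto].
    + exists a. split; [left; reflexivity|].
      intros x [->|Hx]; [lia|]. specialize (Hmax x Hx). lia.
Qed.

Lemma sum_sq_Z_distinct_pos (N : nat) L :
  NoDup L -> length L = N -> (forall x, In x L -> 0 < x) ->
  Z.of_nat N * (Z.of_nat N + 1) * (2 * Z.of_nat N + 1) <= 6 * sum_sq_Z L.
Proof.
  revert L; induction N as [|N IH]; intros L HL Hlen Hpos.
  - destruct L; [simpl; lia|discriminate].
  - destruct (NoDup_pos_exists_gt L N HL Hpos Hlen) as [y [Hy HyN]].
    apply in_split in Hy as [L1 [L2 ->]].
    assert (IHr : Z.of_nat N * (Z.of_nat N + 1) * (2 * Z.of_nat N + 1)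
                  <= 6 * sum_sq_Z (L1 ++ L2)).
    { apply IH.
      - exact (NoDup_remove_1 _ _ _ HL).
      - rewrite length_app in *. simpl in Hlen. lia.
      - intros x Hx. apply Hpos, in_or_app. apply in_app_or in Hx. simpl. tauto. }
    rewrite sum_sq_Z_app in *. cbn [sum_sq_Z]. rewrite Nat2Z.inj_succ. nia.
Qed.

Lemma variance_distinct (N : nat) L : NoDup L -> length L = N ->
  Z.of_nat N * Z.of_nat N * (Z.of_nat N * Z.of_nat N - 1)
  <= 12 * (Z.of_nat N * sum_sq_Z L - sum_Z L * sum_Z L).
Proof.
  revert L; induction N as [|N IH]; intros L HL Hlen.
  - destruct L; [simpl; lia|discriminate].
  - destruct (exists_max_Z L) as [y [Hy Hmax]]; [intros ->; discriminate|].
    apply in_split in Hy as [L1 [L2 ->]].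
    destruct (NoDup_remove _ _ _ HL) as [HL' HyL'].
    set (L' := L1 ++ L2) in *.
    assert (Hlen' : length L' = N) by (unfold L'; rewrite length_app in *; simpl in *; lia).
    assert (HQ := IH L' HL' Hlen').
    (* Adding the maximum [y] increases [N * sum_sq_Z - sum_Z ^ 2] by the sum of the
       squares of the [N] distinct positive gaps [y - x]. *)
    assert (Hgaps : Z.of_nat N * (Z.of_nat N + 1) * (2 * Z.of_nat N + 1)
                    <= 6 * sum_sq_Z (map (Z.sub y) L')).
    { apply sum_sq_Z_distinct_pos.
      - apply NoDup_map_NoDup_ForallPairs; [intros a b _ _; lia|assumption].
      - now rewrite length_map.
      - intros x Hx. apply in_map_iff in Hx as [z [<- Hz]].
        assert (z <> y) by (intros ->; contradiction).
        assert (z <= y) by (apply Hmax, in_or_app; apply in_app_or in Hz; simpl; tauto).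
        lia. }
    rewrite sum_sq_Z_reflect, Hlen' in Hgaps.
    assert (Hsum : sum_Z (L1 ++ y :: L2) = y + sum_Z L')
      by (unfold L'; rewrite !sum_Z_app; simpl; lia).
    assert (Hsq : sum_sq_Z (L1 ++ y :: L2) = y * y + sum_sq_Z L')
      by (unfold L'; rewrite !sum_sq_Z_app; simpl; lia).
    rewrite Hsum, Hsq, Nat2Z.inj_succ. nia.
Qed.
End IntegerVariance.

Section BoundedSums.
Local Open Scope Z_scope.

Fixpoint shifts (j : nat) (c : Z) (L : list Z) : list Z :=
  match j with
  | O => L
  | S i => map (Z.add (Z.of_nat j * c)) L ++ shifts i c L
  end.

Fixpoint bounded_sums (k : nat) (a : list nat) : list Z :=
  match a with
  | [] => [0]
  | x :: r => shifts k (Z.of_nat x) (bounded_sums k r)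
  end.

Lemma length_shifts j c L : length (shifts j c L) = (S j * length L)%nat.
Proof.
  induction j as [|j IH]; cbn [shifts]; [lia|].
  rewrite length_app, length_map, IH. lia.
Qed.

Lemma sum_Z_shifts j c L :
  2 * sum_Z (shifts j c L)
  = 2 * (Z.of_nat j + 1) * sum_Z L
    + c * Z.of_nat (length L) * Z.of_nat j * (Z.of_nat j + 1).
Proof.
  induction j as [|j IH]; cbn [shifts]; [lia|].
  rewrite sum_Z_app, sum_Z_shift, Nat2Z.inj_succ. nia.
Qed.

Lemma sum_sq_Z_shifts j c L :
  6 * sum_sq_Z (shifts j c L)
  = 6 * (Z.of_nat j + 1) * sum_sq_Z L + 6 * c * Z.of_nat j * (Z.of_nat j + 1) * sum_Z L
    + c * c * Z.of_nat (length L) * Z.of_nat j * (Z.of_nat j + 1) * (2 * Z.of_nat j + 1).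
Proof.
  induction j as [|j IH]; cbn [shifts]; [lia|].
  rewrite sum_sq_Z_app, sum_sq_Z_shift, Nat2Z.inj_succ. nia.
Qed.

Lemma in_shifts j c L s : In s (shifts j c L) ->
  exists e, (e <= j)%nat /\ exists s', In s' L /\ s = Z.of_nat e * c + s'.
Proof.
  induction j as [|j IH]; cbn [shifts]; intros Hs.
  - exists 0%nat. split; [lia|]. exists s. split; [assumption|lia].
  - apply in_app_or in Hs as [Hs|Hs].
    + apply in_map_iff in Hs as [s' [<- Hs']].
      exists (S j). split; [lia|]. exists s'. split; [assumption|reflexivity].
    + destruct (IH Hs) as [e [He Hs']]. exists e. split; [lia|assumption].
Qed.

Lemma NoDup_shifts j c L : NoDup L ->
  (forall e e' s s', (e <= j)%nat -> (e' <= j)%nat -> In s L -> In s' L ->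
     Z.of_nat e * c + s = Z.of_nat e' * c + s' -> e = e') ->
  NoDup (shifts j c L).
Proof.
  induction j as [|j IH]; intros HL Hinj; cbn [shifts]; [assumption|].
  apply NoDup_app.
  - apply NoDup_map_NoDup_ForallPairs; [intros a b _ _; lia|assumption].
  - apply IH; [assumption|]. intros e e' s s' ? ? ? ?. apply Hinj; auto; lia.
  - intros x Hx Hx'. apply in_map_iff in Hx as [s [<- Hs]].
    destruct (in_shifts _ _ _ _ Hx') as [e [He [s' [Hs' Heq]]]].
    enough (S j = e) by lia. apply (Hinj _ _ s s'); auto; lia.
Qed.

Lemma length_bounded_sums k a : length (bounded_sums k a) = Nat.pow (S k) (length a).
Proof.
  induction a as [|x a IH]; cbn [bounded_sums length]; [reflexivity|].
  now rewrite length_shifts, IH.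
Qed.

Lemma zsum_ext f g l : (forall s, In s l -> f s = g s) -> zsum f l = zsum g l.
Proof. induction l as [|x l IH]; simpl; intros H; [reflexivity|]. rewrite H, IH; auto. Qed.

Lemma zsum_sub f g l : zsum (fun x => f x - g x) l = zsum f l - zsum g l.
Proof. induction l as [|x l IH]; simpl; [reflexivity|]. rewrite IH. ring. Qed.

Lemma zsum_update f x v r : ~ In x r ->
  zsum (fun y => if Nat.eq_dec y x then v else f y) (x :: r) = v * Z.of_nat x + zsum f r.
Proof.
  intros Hx. simpl. destruct (Nat.eq_dec x x) as [_|]; [|congruence]. f_equal.
  apply zsum_ext. intros y Hy.
  destruct (Nat.eq_dec y x) as [->|]; [contradiction|reflexivity].
Qed.

Lemma in_bounded_sums k a s : NoDup a -> In s (bounded_sums k a) ->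
  exists eps : nat -> Z, (forall x, 0 <= eps x <= Z.of_nat k) /\ s = zsum eps a.
Proof.
  revert s; induction a as [|x r IH]; intros s Ha Hs; cbn [bounded_sums] in Hs.
  - destruct Hs as [<-|[]]. exists (fun _ => 0). split; [lia|reflexivity].
  - apply NoDup_cons_iff in Ha as [Hx Hr].
    destruct (in_shifts _ _ _ _ Hs) as [e [He [s' [Hs' ->]]]].
    destruct (IH s' Hr Hs') as [eps [Heps ->]].
    exists (fun y => if Nat.eq_dec y x then Z.of_nat e else eps y). split.
    + intros y. destruct (Nat.eq_dec y x); [lia|apply Heps].
    + rewrite zsum_update by assumption. reflexivity.
Qed.

Lemma Dk_incl k (S T : nat -> Prop) : (forall x, S x -> T x) -> Dk k T -> Dk k S.
Proof. intros HST HT l eps Hl HS. apply HT; auto. Qed.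

Lemma NoDup_bounded_sums k a :
  NoDup a -> Dk k (fun x => In x a) -> NoDup (bounded_sums k a).
Proof.
  induction a as [|x r IH]; intros Ha HD; cbn [bounded_sums].
  - repeat constructor. intros [].
  - pose proof Ha as Ha'. apply NoDup_cons_iff in Ha' as [Hx Hr].
    apply NoDup_shifts.
    + apply IH; [assumption|]. apply (Dk_incl _ _ _ (fun y Hy => in_cons x y r Hy) HD).
    + intros e e' s s' He He' Hs Hs' Heq.
      destruct (in_bounded_sums k r s Hr Hs) as [eps [Heps ->]].
      destruct (in_bounded_sums k r s' Hr Hs') as [eps' [Heps' ->]].
      set (diff := fun y => if Nat.eq_dec y x then Z.of_nat e - Z.of_nat e'
                            else eps y - eps' y).
      assert (Hdiff : diff x = 0).
      { apply (HD (x :: r) diff Ha); [tauto| | |now left].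
        - intros y _. unfold diff. destruct (Nat.eq_dec y x).
          + lia.
          + specialize (Heps y). specialize (Heps' y). lia.
        - unfold diff. rewrite zsum_update, zsum_sub by assumption. lia. }
      unfold diff in Hdiff. destruct (Nat.eq_dec x x); [lia|congruence].
Qed.

Lemma variance_bounded_sums k a :
  12 * (Z.of_nat (S k ^ length a) * sum_sq_Z (bounded_sums k a)
        - sum_Z (bounded_sums k a) * sum_Z (bounded_sums k a))
  = Z.of_nat (S k ^ length a) * Z.of_nat (S k ^ length a) * (Z.of_nat k * (Z.of_nat k + 2))
    * sum_sq_Z (map Z.of_nat a).
Proof.
  rewrite <- length_bounded_sums.
  induction a as [|x r IH]; [simpl; ring|].
  cbn [bounded_sums map sum_sq_Z] in *. set (L := bounded_sums k r) in *.
  assert (H1 := sum_Z_shifts k (Z.of_nat x) L).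
  assert (H2 := sum_sq_Z_shifts k (Z.of_nat x) L).
  rewrite length_shifts, Nat2Z.inj_mul, Nat2Z.inj_succ.
  nia.
Qed.

End BoundedSums.

Lemma le_list_max x l : In x l -> (x <= list_max l)%nat.
Proof.
  intros Hx. assert (Hall := proj1 (list_max_le l (list_max l)) (le_n _)).
  rewrite Forall_forall in Hall. auto.
Qed.

Lemma Dk_pow_sq_le k a M : NoDup a -> Dk k (fun x => In x a) ->
  (forall x, In x a -> (x <= M)%nat) ->
  (S k ^ length a * S k ^ length a <= length a * (k * (k + 2)) * (M * M) + 1)%nat.
Proof.
  intros Ha HD HM.
  assert (HV := variance_distinct _ _ (NoDup_bounded_sums k a Ha HD) (length_bounded_sums k a)).
  rewrite variance_bounded_sums in HV.
  assert (Hsq : (sum_sq_Z (map Z.of_nat a)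
                 <= Z.of_nat (length a) * (Z.of_nat M * Z.of_nat M))%Z).
  { rewrite <- (length_map Z.of_nat a). apply sum_sq_Z_le.
    intros x Hx. apply in_map_iff in Hx as [y [<- Hy]]. specialize (HM y Hy). lia. }
  set (N := Z.of_nat (S k ^ length a)) in HV.
  assert (HN : (0 < N * N)%Z).
  { assert (0 < S k ^ length a)%nat by (apply Nat.neq_0_lt_0, Nat.pow_nonzero; lia). nia. }
  assert (HV' : (N * N - 1 <= Z.of_nat k * (Z.of_nat k + 2) * sum_sq_Z (map Z.of_nat a))%Z).
  { apply (Z.mul_le_mono_pos_l _ _ (N * N)); [assumption|]. lia. }
  assert (HC : (0 <= Z.of_nat k * (Z.of_nat k + 2))%Z) by lia.
  apply (Z.mul_le_mono_nonneg_l _ _ _ HC) in Hsq.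
  unfold N in HV'. lia.
Qed.

Lemma Dk_pow_sq_le_R k a M : NoDup a -> Dk k (fun x => In x a) ->
  (forall x, In x a -> (x <= M)%nat) ->
  (INR (k + 1) ^ length a) ^ 2
  <= INR (length a) * (INR k * INR (k + 2)) * INR M ^ 2 + 1.
Proof.
  intros Ha HD HM.
  pose proof (le_INR _ _ (Dk_pow_sq_le k a M Ha HD HM)) as H.
  rewrite plus_INR, !mult_INR, pow_INR in H.
  replace (k + 1)%nat with (S k) by lia. simpl INR in H |- *. lra.
Qed.

Lemma PI_ge_3135 : 3135 / 1000 <= PI.
Proof.
  pose proof (proj1 (PI_2_3_7_ineq 0)) as H.
  unfold sum_f_R0, tg_alt, PI_2_3_7_tg, Ratan_seq in H. simpl in H. lra.
Qed.

Lemma ln_le x y : 0 < x -> x <= y -> ln x <= ln y.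
Proof. intros Hx [Hxy|<-]; [left; apply ln_increasing|right]; auto. Qed.

Lemma ln_le_sub_1 x : 0 < x -> ln x <= x - 1.
Proof. intros Hx. pose proof (exp_ineq1_le (ln x)) as H. rewrite exp_ln in H; lra. Qed.

Lemma one_le_INR n : (1 <= n)%nat -> 1 <= INR n.
Proof. intros Hn. apply (le_INR 1). assumption. Qed.

Lemma one_le_INR_mul_add_2 k : (1 <= k)%nat -> 1 <= INR k * INR (k + 2).
Proof.
  intros hk. pose proof (one_le_INR k hk). pose proof (one_le_INR (k + 2) ltac:(lia)). nra.
Qed.

Lemma lower_bound_nonneg k m : 0 <= lower_bound k m.
Proof.
  unfold lower_bound. apply Rmult_le_pos; [|apply sqrt_pos].
  apply Rmult_le_pos; [apply pow_le, pos_INR|lra].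
Qed.

Lemma lower_bound_le k m (M : R) : (1 <= k)%nat -> (1 <= m)%nat -> 0 <= M ->
  (INR (k + 1) ^ m) ^ 2 <= INR m * (INR k * INR (k + 2)) * M ^ 2 + 1 ->
  lower_bound k m <= M.
Proof.
  intros hk hm hM H. unfold lower_bound.
  set (X := INR (k + 1) ^ m) in *. set (C := INR k * INR (k + 2)) in *.
  assert (HX : 2 <= X).
  { unfold X. replace 2 with (2 ^ 1) by ring. apply Rle_trans with (2 ^ m).
    - apply Rle_pow; [lra|assumption].
    - apply pow_incr. split; [lra|]. apply (le_INR 2). lia. }
  assert (HC : 1 <= C) by exact (one_le_INR_mul_add_2 k hk).
  pose proof (one_le_INR m hm). pose proof PI_ge_3135.
  replace (INR m * PI * INR k * INR (k + 2)) with (PI * (INR m * C)) by (unfold C; ring).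
  assert (HD : 0 < PI * (INR m * C)) by (apply Rmult_lt_0_compat; nra).
  apply Rsqr_incr_0_var; [|assumption]. unfold Rsqr.
  replace (X / 2 * sqrt (6 / (PI * (INR m * C))) * (X / 2 * sqrt (6 / (PI * (INR m * C)))))
    with (X * X / 4 * (sqrt (6 / (PI * (INR m * C))) * sqrt (6 / (PI * (INR m * C))))) by field.
  rewrite sqrt_sqrt by (apply Rlt_le, Rdiv_lt_0_compat; lra).
  apply Rmult_le_reg_r with (PI * (INR m * C)); [assumption|].
  replace (X * X / 4 * (6 / (PI * (INR m * C))) * (PI * (INR m * C))) with (3 / 2 * (X * X))
    by (field; lra).
  (* [PI >= 3] and [X ^ 2 >= 2] absorb the factor [3 / 2] and the [+ 1]. *)
  assert (0 <= INR m * C * (M * M)) by (apply Rmult_le_pos; nra).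
  nra.
Qed.

Lemma log_le_of_pow_sq_le k m n : (1 <= k)%nat -> (1 <= m)%nat -> (1 <= n)%nat ->
  (INR (k + 1) ^ m) ^ 2 <= INR m * (INR k * INR (k + 2)) * INR n ^ 2 + 1 ->
  2 * INR m * ln (INR (k + 1))
  <= ln 2 + ln (INR m) + ln (INR k * INR (k + 2)) + 2 * ln (INR n).
Proof.
  intros hk hm hn H.
  set (C := INR k * INR (k + 2)) in *.
  assert (HC : 1 <= C) by exact (one_le_INR_mul_add_2 k hk).
  pose proof (one_le_INR m hm). pose proof (one_le_INR n hn).
  assert (HK : 0 < INR (k + 1)) by (apply lt_0_INR; lia).
  assert (Hle : ln ((INR (k + 1) ^ m) ^ 2) <= ln (2 * INR m * C * INR n ^ 2)).
  { apply ln_le; [apply pow_lt, pow_lt; assumption|].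
    assert (1 <= INR m * C * INR n ^ 2) by (assert (1 <= INR m * C) by nra; nra). lra. }
  rewrite !ln_mult, !ln_pow in Hle by (try apply pow_lt; nra).
  simpl INR in Hle. lra.
Qed.

Lemma mul_ln2_le_PI_div_3 x L : 1 <= x -> 10000 <= L ->
  2 * (x - 1) * ln 2 <= ln 2 + ln x + 2 * L -> x * ln 2 <= PI / 3 * L.
Proof.
  intros Hx HL H.
  pose proof ln_lt_2. pose proof (ln_le_sub_1 2 ltac:(lra)). pose proof PI_ge_3135.
  set (u := sqrt x).
  assert (Hu : u * u = x) by (apply sqrt_sqrt; lra).
  assert (Hu1 : 1 <= u) by (rewrite <- sqrt_1; apply sqrt_le_1_alt; lra).
  assert (Hlnx : ln x <= 2 * u - 2).
  { rewrite <- Hu, ln_mult by lra. pose proof (ln_le_sub_1 u ltac:(lra)). lra. }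
  destruct (Rle_dec u 100) as [Hsmall|Hlarge].
  - assert (x <= 10000) by nra. nra.
  - (* [ln x <= 2 u <= x / 50] is absorbed by the slack [PI / 3 > 1.045]. *)
    assert (HL' : (x - 3 / 2) * ln 2 - u + 1 <= L) by lra.
    assert (1045 / 1000 * L <= PI / 3 * L) by nra.
    assert (100 * u <= x) by nra.
    assert (x / 2 <= x * ln 2) by nra.
    nra.
Qed.

Lemma count_le_count_bound k m n : (1 <= k)%nat -> (1 <= m)%nat -> (1 <= n)%nat ->
  10000 <= ln (INR n) ->
  (INR (k + 1) ^ m) ^ 2 <= INR m * (INR k * INR (k + 2)) * INR n ^ 2 + 1 ->
  INR m <= count_bound k n.
Proof.
  intros hk hm hn HL H.
  assert (Hlog := log_le_of_pow_sq_le k m n hk hm hn H).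
  pose proof (one_le_INR m hm). pose proof ln_lt_2. pose proof PI_ge_3135.
  unfold count_bound, logb.
  set (K := INR (k + 1)) in *. set (C := INR k * INR (k + 2)) in *.
  set (x := INR m) in *. set (L := ln (INR n)) in *.
  assert (HC : 1 <= C) by exact (one_le_INR_mul_add_2 k hk).
  assert (HCK : C <= K * K) by (unfold C, K; rewrite !plus_INR; simpl; nra).
  assert (HK : 2 <= K) by (apply (le_INR 2); lia).
  assert (HlnK : ln 2 <= ln K) by (apply ln_le; lra).
  assert (HlnC : ln C <= 2 * ln K).
  { replace (2 * ln K) with (ln (K * K)) by (rewrite ln_mult; lra). apply ln_le; lra. }
  assert (Hx : x * ln 2 <= PI / 3 * L).
  { apply mul_ln2_le_PI_div_3; [lra|lra|].
    assert ((x - 1) * ln 2 <= (x - 1) * ln K) by (apply Rmult_le_compat_l; lra). lra. }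
  assert (Hlnx : ln x <= ln (PI / 3) + ln (L / ln 2)).
  { rewrite <- ln_mult by (apply Rdiv_lt_0_compat; lra). apply ln_le; [lra|].
    unfold Rdiv at 2. apply (Rmult_le_reg_r (ln 2)); [lra|].
    replace (PI / 3 * (L * / ln 2) * ln 2) with (PI / 3 * L) by (field; lra). lra. }
  replace (2 * PI / 3 * C) with (2 * (PI / 3) * C) by field.
  assert (HPI : 0 < PI / 3) by lra.
  rewrite (ln_mult (2 * (PI / 3)) C), (ln_mult 2 (PI / 3)) by lra.
  apply (Rmult_le_reg_r (2 * ln K)); [lra|].
  replace ((L / ln K + / 2 * (ln (L / ln 2) / ln K) + / 2 * ((ln 2 + ln (PI / 3) + ln C) / ln K))
           * (2 * ln K))
    with (2 * L + ln (L / ln 2) + ln 2 + ln (PI / 3) + ln C) by (field; lra).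
  lra.
Qed.

Lemma count_bound_ge_1 k n : (1 <= k)%nat -> (1 <= n)%nat -> 10000 <= ln (INR n) ->
  1 <= count_bound k n.
Proof.
  intros hk hn HL. apply (count_le_count_bound k 1 n hk (le_n 1) hn HL).
  rewrite !plus_INR. simpl.
  assert (1 <= INR n * INR n) by (pose proof (one_le_INR n hn); nra).
  assert (0 <= INR k * (INR k + (1 + 1))) by (pose proof (pos_INR k); nra).
  nra.
Qed.

Lemma Dk_lower_bound_le_max k a : (1 <= k)%nat -> (1 <= length a)%nat ->
  NoDup a -> Dk k (fun x => In x a) -> lower_bound k (length a) <= INR (list_max a).
Proof.
  intros hk hm Ha HD.
  apply lower_bound_le; [assumption|assumption|apply pos_INR|].
  apply Dk_pow_sq_le_R; [assumption|assumption|intros x; apply le_list_max].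
Qed.

Lemma Dk_length_le_count_bound k (S : nat -> Prop) n l :
  (1 <= k)%nat -> (1 <= n)%nat -> 10000 <= ln (INR n) -> Dk k S -> NoDup l ->
  (forall x, In x l -> S x /\ (1 <= x <= n)%nat) ->
  INR (length l) <= count_bound k n.
Proof.
  intros hk hn HL hS hl hin.
  destruct l as [|x l']; [simpl; pose proof (count_bound_ge_1 k n hk hn HL); lra|].
  apply count_le_count_bound; [assumption|simpl; lia|assumption|assumption|].
  apply Dk_pow_sq_le_R; [assumption| |intros y hy; apply hin; assumption].
  apply (Dk_incl k _ S); [intros y hy; apply hin|]; assumption.
Qed.

Theorem theorem6 (k : nat) (hk : (1 <= k)%nat) :
  (* a_m >= (1 + o(1)) (k+1)^m/2 sqrt(6/(m pi k(k+2))), uniformly over D_k sets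
     {a_1 < ... < a_m} of size m, as m -> oo *)
  (forall eps : R, 0 < eps ->
     exists M : nat, forall (m : nat) (a : list nat),
       (M <= m)%nat -> NoDup a -> length a = m -> Dk k (fun x => In x a) ->
       (1 - eps) * lower_bound k m <= INR (list_max a))
  /\
  (* for an infinite D_k set S: |S cap [1,n]| <= count_bound k n + o(1) *)
  (forall S : nat -> Prop, Dk k S -> (forall N : nat, exists x, (N <= x)%nat /\ S x) ->
     forall eps : R, 0 < eps ->
       exists N : nat, forall n : nat, (N <= n)%nat ->
         forall l : list nat, NoDup l ->
           (forall x, In x l -> S x /\ (1 <= x <= n)%nat) ->
           INR (length l) <= count_bound k n + eps).
Proof.
  split.
  - intros eps heps. exists 1%nat. intros m a hm ha <- hD.
    pose proof (lower_bound_nonneg k (length a)).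
    pose proof (Dk_lower_bound_le_max k a hk hm ha hD).
    nra.
  - intros S hS _ eps heps.
    destruct (INR_unbounded (exp 10000)) as [N HN].
    exists (Nat.max 1 N). intros n hn l hl hin.
    assert (HL : 10000 <= ln (INR n)).
    { rewrite <- (ln_exp 10000). apply ln_le; [apply exp_pos|].
      apply Rle_trans with (INR N); [lra|apply le_INR; lia]. }
    pose proof (Dk_length_le_count_bound k S n l hk ltac:(lia) HL hS hl hin).
    lra.
Qed.
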